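(* Let $H$ be a bigraph. Every directed path in the condensation of $H^+$ has at most three vertices.
   Context: A bigraph is a bipartite graph $H$ with fixed bipartition $(B,W)$ (black/white colours). The pair-digraph $H^+$ has vertices all ordered pairs $(u,v)$ of distinct vertices of $H$, and arcs $(u,v)\to(u',v)$ whenever $u,v$ have the same colour, $uu'\in E(H)$, $vu'\notin E(H)$, and $(u,v)\to(u,v')$ whenever $u,v$ have different colours, $vv'\in E(H)$, $uv\notin E(H)$. The condensation of a digraph is obtained by contracting each strong component to a single vertex and deleting loops and multiple arcs. *)

From HB Require Import structures.
From mathcomp Require Import all_boot.
Set Implicit Arguments. Unset Strict Implicit. Unset Printing Implicit Defensive.

(* A bigraph: vertex set T (finite), colour col (true = black B, false = white W),
   edge relation E which is symmetric and only joins vertices of different colours. *)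
Definition is_bigraph (T : finType) (col : T -> bool) (E : rel T) : Prop :=
  (forall x y, E x y = E y x) /\ (forall x y, E x y -> col x != col y).

Definition pairv (T : finType) := {p : T * T | p.1 != p.2}.

Definition plus_arc (T : finType) (col : T -> bool) (E : rel T) : rel (pairv T) :=
  fun p q =>
    let u := (val p).1 in let v := (val p).2 in
    let u' := (val q).1 in let v' := (val q).2 in
    [|| [&& col u == col v, v' == v, E u u' & ~~ E v u']
      | [&& col u != col v, u' == u, E v v' & ~~ E u v]].

Definition scomp (P : finType) (a : rel P) (x : P) : {set P} :=
  [set y | connect a x y && connect a y x].

Definition is_scomp (P : finType) (a : rel P) (C : {set P}) : bool :=
  [exists x, C == scomp a x].

Definition cond_arc (P : finType) (a : rel P) : rel {set P} :=
  fun C D => (C != D) && [exists x in C, exists y in D, a x y].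

Definition cond_dipath (P : finType) (a : rel P) (s : seq {set P}) : Prop :=
  all (is_scomp a) s /\ uniq s /\ sorted (cond_arc a) s.

From mathcomp Require Import all_boot.

(* The argument has a general part and a bigraph part.
   - General part: call a digraph "middle-reversible" if, for every walk
     w -> x -> y -> z of three arcs, y reaches x back.  In such a digraph an
     arc c -> d between two strong components C2 and C3 can have no
     condensation arc entering C2 and none leaving C3: an arc entering C2
     yields (inside C2) an arc entering c, an arc leaving C3 yields an arc
     leaving d, so c and d are strongly connected and C2 = C3.  Hence a
     condensation path has no four consecutive vertices.
   - Bigraph part: H^+ is middle-reversible.  If the middle arc
     (u,v) -> (u',v) is of "same colour" type, the arc entering (u,v) must be
     of "different colour" type, (u,b) -> (u,v), and then
     (u',v) -> (u',b) -> (u,b) -> (u,v).  Symmetrically, if the middle arc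
     (u,v) -> (u,v') is of "different colour" type, the arc leaving (u,v')
     is (u,v') -> (u'',v') and then (u'',v') -> (u'',v) -> (u,v). *)

Section Condensation.

Variables (P : finType) (a : rel P).

Lemma mem_scomp (x y : P) :
  (y \in scomp a x) = connect a x y && connect a y x.
Proof. by rewrite inE. Qed.

Lemma scomp_of_mem {C : {set P}} {y : P} :
  is_scomp a C -> y \in C -> C = scomp a y.
Proof.
case/existsP=> x /eqP -> /[!mem_scomp] /andP[xy yx].
apply/setP=> z; rewrite !mem_scomp.
apply/andP/andP=> [[xz zx]|[yz zy]]; split.
- exact: connect_trans yx xz.
- exact: connect_trans zx xy.
- exact: connect_trans xy yz.
- exact: connect_trans zy yx.
Qed.

Lemma arc_into_connect {x y z : P} :
  a x y -> connect a y z -> exists p, a p z.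
Proof.
move=> xy /connectP[q yq ->]; case/lastP: q yq => [|q t]; first by exists x.
by rewrite rcons_path last_rcons => /andP[_ qt]; exists (last y q).
Qed.

Lemma arc_from_connect {x y z : P} :
  connect a x y -> a y z -> exists r, a x r.
Proof.
move=> /connectP[[|t q] /= xq ->] yz; first by exists z.
by case/andP: xq => xt _; exists t.
Qed.

Hypothesis middle_reversible :
  forall {w x y z}, a w x -> a x y -> a y z -> connect a y x.

Lemma no_condensation_walk4 {C1 C2 C3 C4 : {set P}} :
  is_scomp a C2 -> is_scomp a C3 ->
  cond_arc a C1 C2 -> cond_arc a C2 C3 -> cond_arc a C3 C4 -> False.
Proof.
move=> sC2 sC3 /andP[_ /existsP[x /andP[_ /existsP[b /andP[bC2 xb]]]]].
move=> /andP[C23 /existsP[c /andP[cC2 /existsP[d /andP[dC3 cd]]]]].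
move=> /andP[_ /existsP[e /andP[eC3 /existsP[f /andP[_ ef]]]]].
have C2c := scomp_of_mem sC2 cC2; have C3d := scomp_of_mem sC3 dC3.
have /andP[_ bc] : connect a c b && connect a b c by rewrite -mem_scomp -C2c.
have /andP[de _] : connect a d e && connect a e d by rewrite -mem_scomp -C3d.
have [p pc] := arc_into_connect xb bc.
have [r dr] := arc_from_connect de ef.
have dc := middle_reversible pc cd dr.
have dC2 : d \in C2 by rewrite C2c mem_scomp connect1.
by rewrite (scomp_of_mem sC2 dC2) -C3d eqxx in C23.
Qed.

Lemma condensation_path_short (s : seq {set P}) :
  cond_dipath a s -> size s <= 3.
Proof.
case: s => [|C1 [|C2 [|C3 [|C4 s]]]] //= [/and4P[_ sC2 sC3 _] [_]].
case/and4P=> C12 C23 C34 _.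
by case: (no_condensation_walk4 sC2 sC3 C12 C23 C34).
Qed.

End Condensation.

Section PairDigraph.

Variables (T : finType) (col : T -> bool) (E : rel T).
Hypothesis bigraph : is_bigraph col E.

Let arc := plus_arc col E.

Lemma edge_sym (x y : T) : E x y = E y x.
Proof. by case: bigraph. Qed.

Lemma edge_colours {x y : T} : E x y -> col x != col y.
Proof. by case: bigraph => _; apply. Qed.

Lemma colour_between {x y z : T} : col x != col y -> col y != col z ->
  col x == col z.
Proof. by case: (col x); case: (col y); case: (col z). Qed.

Lemma same_colour_arc (u v u' : T) (uv : u != v) (u'v : u' != v) :
  col u == col v -> E u u' -> ~~ E v u' ->
  arc (exist _ (u, v) uv) (exist _ (u', v) u'v).
Proof. by move=> cuv uu' vu'; rewrite /arc /plus_arc /= cuv eqxx uu' vu'. Qed.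

Lemma diff_colour_arc (u v v' : T) (uv : u != v) (uv' : u != v') :
  col u != col v -> E v v' -> ~~ E u v ->
  arc (exist _ (u, v) uv) (exist _ (u, v') uv').
Proof. by move=> cuv vv' Nuv; rewrite /arc /plus_arc /= cuv eqxx vv' Nuv orbT. Qed.

(* A same-colour middle arc (u,v) -> (u',v) is reversible, because the arc
   entering (u,v) is some (u,b) -> (u,v). *)
Lemma same_colour_middle_reversible (w x y : pairv T) :
  arc w x -> arc x y -> col (val x).1 == col (val x).2 -> connect arc y x.
Proof.
case: w x y => [[a b] ab] [[u v] uv] [[u' v'] u'v'] /=.
move=> wx xy cuv; rewrite /arc /plus_arc /= cuv /= orbF in wx xy.
case/and3P: xy => /eqP Ev' uu' Nvu'; subst v'.
case/orP: wx => [/and4P[cab /eqP Eb au _]|/and4P[cab /eqP Ea bv Nab]].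
  by move: (edge_colours au); rewrite (eqP cab) -Eb (eqP cuv) eqxx.
subst a.
have u'b : u' != b by apply: contraNneq Nvu' => ->; rewrite edge_sym.
have cu'u : col u' != col u by rewrite eq_sym edge_colours.
have cu'v : col u' != col v by rewrite -(eqP cuv).
apply: (connect_trans (y := exist _ (u', b) u'b)).
  by apply/connect1/diff_colour_arc; rewrite // edge_sym.
apply: (connect_trans (y := exist _ (u, b) ab)); apply: connect1.
  by apply: same_colour_arc; [exact: colour_between cu'u cab|rewrite edge_sym..].
exact: diff_colour_arc.
Qed.

(* A different-colour middle arc (u,v) -> (u,v') is reversible, because the
   arc leaving (u,v') is some (u,v') -> (u'',v'). *)
Lemma diff_colour_middle_reversible (x y z : pairv T) :
  arc x y -> arc y z -> col (val x).1 != col (val x).2 -> connect arc y x.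
Proof.
case: x y z => [[u v] uv] [[u' v'] u'v'] [[u'' v''] u''v''] /=.
move=> xy yz cuv; rewrite /arc /plus_arc /= (negbTE cuv) /= in xy yz.
case/and3P: xy => /eqP Eu' vv' Nuv; subst u'.
have cuv' : col u == col v' by apply: colour_between cuv (edge_colours vv').
case/orP: yz => /and4P[cuv'' /eqP Ev'' uu'' Nv'u'']; last by rewrite cuv' in cuv''.
subst v''.
have u''v : u'' != v by apply: contraNneq Nv'u'' => ->; rewrite edge_sym.
have cu''u : col u'' != col u by rewrite eq_sym edge_colours.
apply: (connect_trans (y := exist _ (u'', v') u''v'')).
  by apply: connect1; apply: same_colour_arc.
apply: (connect_trans (y := exist _ (u'', v) u''v)); apply: connect1.
  by apply: diff_colour_arc; [rewrite -(eqP cuv')|rewrite edge_sym..].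
by apply: same_colour_arc; [exact: colour_between cu''u cuv|rewrite edge_sym..].
Qed.

Lemma pair_digraph_middle_reversible (w x y z : pairv T) :
  arc w x -> arc x y -> arc y z -> connect arc y x.
Proof.
move=> wx xy yz; case: (boolP (col (val x).1 == col (val x).2)) => cx.
- exact: same_colour_middle_reversible wx xy cx.
- exact: diff_colour_middle_reversible xy yz cx.
Qed.

End PairDigraph.

Theorem lemma2p8 (T : finType) (col : T -> bool) (E : rel T) :
  is_bigraph col E ->
  forall s : seq {set pairv T},
    cond_dipath (plus_arc col E) s -> size s <= 3.
Proof.
move=> bigraph s; apply: condensation_path_short => w x y z.
exact: pair_digraph_middle_reversible.
Qed.
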